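(* Let $G$ be a connected (finite, simple) graph, $\mathcal{F}$ a maximum induced forest of $G$, $S=V(G)\setminus V(\mathcal{F})$, $H$ the contracted graph, and $B$ a skeleton of $H$ with the maximum possible number of 2-edges among all skeletons (all as defined in the context). Then every vertex of $S$ is incident in $B$ to at least one 2-edge.
   Context: A maximum induced forest of $G$ is an induced forest of $G$ with the maximum number of vertices. Let $\mathcal{T}$ be the set of connected components (trees) of $\mathcal{F}$ and $S=V(G)\setminus V(\mathcal{F})$. The graph $H$ has vertex set $\{x_T : T\in\mathcal{T}\}\cup S$ (the $x_T$ are called tree vertices, the vertices of $S$ non-tree vertices) and edge set consisting of all edges of $G[S]$ together with all pairs $ux_T$ with $u\in S$, $T\in\mathcal{T}$ such that $u$ has at least one neighbor in $V(T)$ in $G$. An edge $ux_T$ of $H$ is a 2-edge if $u$ has at least two neighbors in $V(T)$ in $G$; all other edges of $H$ (including all edges with both endpoints in $S$) are 1-edges. A skeleton is a spanning tree of $H$ rooted at some tree vertex, with all edges directed towards the root (an in-arborescence). *)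

From mathcomp Require Import all_boot.
Set Implicit Arguments. Unset Strict Implicit. Unset Printing Implicit Defensive.

Definition simple_graph (V : finType) (e : rel V) : Prop :=
  symmetric e /\ irreflexive e.

Definition connected_graph (V : finType) (e : rel V) : Prop :=
  (0 < #|V|) /\ forall x y : V, connect e x y.

Definition acyclic (T : finType) (r : rel T) : Prop :=
  forall s : seq T, uniq s -> 2 < size s -> ~~ cycle r s.

Definition induced (V : finType) (e : rel V) (F : {set V}) : rel V :=
  fun x y => [&& x \in F, y \in F & e x y].

Definition induced_forest (V : finType) (e : rel V) (F : {set V}) : Prop :=
  acyclic (induced e F).

Definition max_induced_forest (V : finType) (e : rel V) (F : {set V}) : Prop :=
  induced_forest e F /\
  forall F' : {set V}, induced_forest e F' -> #|F'| <= #|F|.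

Definition compF (V : finType) (e : rel V) (F : {set V}) (x : V) : {set V} :=
  [set y | connect (induced e F) x y].

Definition is_tree (V : finType) (e : rel V) (F : {set V}) (T : {set V}) : bool :=
  [exists x in F, T == compF e F x].

(* Vertices of H: inl T for a tree T (tree vertex x_T), inr u for u in S. *)
Definition HV (V : finType) : finType := ({set V} + V)%type.

Definition hvert (V : finType) (e : rel V) (F : {set V}) (x : HV V) : bool :=
  match x with
  | inl T => is_tree e F T
  | inr u => u \notin F
  end.

Definition hadj (V : finType) (e : rel V) (F : {set V}) : rel (HV V) :=
  fun x y =>
  match x, y with
  | inr u, inr v => [&& u \notin F, v \notin F & e u v]
  | inr u, inl T => [&& u \notin F, is_tree e F T & [exists w in T, e u w]]
  | inl T, inr u => [&& u \notin F, is_tree e F T & [exists w in T, e u w]]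
  | inl _, inl _ => false
  end.

Definition two_edge (V : finType) (e : rel V) (u : V) (T : {set V}) : bool :=
  1 < #|[set w in T | e u w]|.

Definition spanning_tree_H (V : finType) (e : rel V) (F : {set V})
    (B : rel (HV V)) : Prop :=
  symmetric B /\
  (forall x y, B x y -> hadj e F x y) /\
  (forall x y, hvert e F x -> hvert e F y -> connect B x y) /\
  acyclic B.

(* A skeleton: spanning tree of H together with a root that is a tree
   vertex (edges are then implicitly oriented towards the root). *)
Definition skeleton (V : finType) (e : rel V) (F : {set V})
    (B : rel (HV V)) (r : HV V) : Prop :=
  spanning_tree_H e F B /\ hvert e F r /\ (if r is inl _ then True else False).

(* Number of 2-edges of B: each 2-edge joins some u in S to some x_T,
   so it is counted once as a pair (u, T). *)
Definition n_two_edges (V : finType) (e : rel V) (B : rel (HV V)) : nat :=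
  #|[set p : V * {set V} | B (inr p.1) (inl p.2) && two_edge e p.1 p.2]|.

From mathcomp Require Import all_boot.
Set Implicit Arguments. Unset Strict Implicit. Unset Printing Implicit Defensive.

(* Suppose some u in S is incident to no 2-edge of B. Maximality of F gives a
   tree T containing two neighbours of u (otherwise F + u would still induce a
   forest), so u x_T is a 2-edge of H. Exchanging the first edge of the B-path
   from u to x_T for u x_T yields a skeleton with the same root; the removed
   edge, being incident to u, was not a 2-edge, so the new skeleton has one
   more 2-edge than B, a contradiction. *)

Section EdgeExchange.
Variable T : finType.
Implicit Types (S : rel T) (x y a b c d : T).

(* Graphs are symmetric relations: edges are added and removed in both
   orientations at once. *)
Definition uedge x y : rel T :=
  fun p q => ((p == x) && (q == y)) || ((p == y) && (q == x)).

Definition rem_edge S x y : rel T := fun p q => S p q && ~~ uedge x y p q.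

Definition add_edge S x y : rel T := fun p q => S p q || uedge x y p q.

Lemma uedge_sym x y : symmetric (uedge x y).
Proof. by move=> p q; rewrite /uedge orbC (andbC (q == x)) (andbC (q == y)). Qed.

Lemma uedgeC x y p q : uedge x y p q = uedge y x p q.
Proof. by rewrite /uedge orbC. Qed.

Lemma rem_edge_sym S x y : symmetric S -> symmetric (rem_edge S x y).
Proof. by move=> sS p q; rewrite /rem_edge sS uedge_sym. Qed.

Lemma add_edge_sym S x y : symmetric S -> symmetric (add_edge S x y).
Proof. by move=> sS p q; rewrite /add_edge sS uedge_sym. Qed.

Lemma rem_edge_sub S x y : subrel (rem_edge S x y) S.
Proof. by move=> p q /andP[]. Qed.

Lemma add_edge_sub S x y : subrel S (add_edge S x y).
Proof. by move=> p q Spq; rewrite /add_edge Spq. Qed.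

Lemma connect_mono {S S' : rel T} : subrel S S' -> subrel (connect S) (connect S').
Proof. by move=> sub; apply: connect_sub => p q /sub /connect1. Qed.

Lemma connect_add_edge S a b x y : connect (add_edge S a b) x y ->
  [\/ connect S x y, connect S x a /\ connect S b y | connect S x b /\ connect S a y].
Proof.
case/connectP=> p + ->; elim: p x => [|z p IHp] x /=; first by constructor 1.
case/andP=> /orP[Sxz | /orP[] /andP[/eqP-> /eqP->]] /IHp.
- have cxz := connect1 Sxz.
  by case=> [h | [h1 h2] | [h1 h2]];
    [constructor 1 | constructor 2 | constructor 3]; rewrite ?(connect_trans cxz).
- by case=> [h | [h1 h2] | [h1 h2]]; [constructor 2 | constructor 2 | constructor 1].
- by case=> [h | [h1 h2] | [h1 h2]]; [constructor 3 | constructor 1 | constructor 3].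
Qed.

Lemma acyclic_bridge S x y : symmetric S -> acyclic S -> S x y -> x != y ->
  ~ connect (rem_edge S x y) x y.
Proof.
move=> sS acS Sxy nxy /connectP[p /shortenP[p' pathp up _] lastp].
case: p' pathp up lastp => [|z [|w q]] pathp up /= lastp.
- by rewrite lastp eqxx in nxy.
- by move: pathp => /= /andP[/andP[_]]; rewrite /uedge -lastp !eqxx.
have /negP[] := acS [:: x, z, w & q] up isT.
rewrite /cycle rcons_path (sub_path (@rem_edge_sub S x y) pathp) /=.
by rewrite -lastp sS.
Qed.

Lemma bridges_acyclic S : symmetric S ->
  (forall x y, S x y -> x != y -> ~ connect (rem_edge S x y) x y) -> acyclic S.
Proof.
move=> sS bridge [|x [|y [|z p]]] // us _; apply/negP.
rewrite /cycle /= => /and3P[Sxy Syz pathp].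
move: us; rewrite /= !inE !negb_or.
case/andP=> /and3P[nxy nxz nxp] /andP[/andP[nyz nyp] _].
apply: (bridge x y Sxy nxy); rewrite (sym_connect_sym (rem_edge_sym x y sS)).
apply/connectP; exists (z :: rcons p x); last by rewrite /= last_rcons.
rewrite /= {1}/rem_edge Syz /uedge eqxx (eq_sym y x) (negbTE nxy).
rewrite (eq_sym z x) (negbTE nxz) /=.
apply: (@sub_in_path _ (predC1 y) S) => [p1 q1 /= p1y q1y Spq||//].
  by rewrite /rem_edge /uedge Spq (negbTE p1y) (negbTE q1y) !andbF.
rewrite /= all_rcons /= eq_sym nyz nxy /=.
by apply/allP => w wp /=; apply: contraNneq nyp => <-.
Qed.

Lemma connect_first_edge S c b : connect S c b -> c != b ->
  exists d, [/\ S c d, c != d & connect (rem_edge S c d) d b].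
Proof.
case/connectP=> p /shortenP[[|d q] pathq ucq _] ->; first by rewrite eqxx.
move: pathq ucq => /= /andP[Scd pathq] /andP[ncq _] _.
exists d; split=> //; first by apply: contraNneq ncq => ->; rewrite mem_head.
apply/connectP; exists q => //.
apply: (@sub_in_path _ (predC1 c) S) => [x y /= xc yc Sxy||//].
  by rewrite /rem_edge /uedge Sxy (negbTE xc) (negbTE yc) andbF.
by apply/allP => x xq /=; apply: contraNneq ncq => <-.
Qed.

Section Exchange.
Context {S : rel T} {c d b : T}.
Hypotheses (sS : symmetric S) (Scd : S c d) (ncd : c != d).
Hypothesis Rdb : connect (rem_edge S c d) d b.

Local Notation R := (rem_edge S c d).
Local Notation S' := (add_edge R c b).

Let sR : symmetric R := rem_edge_sym c d sS.

Lemma exchange_sym : symmetric S'.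
Proof. exact: add_edge_sym. Qed.

Lemma exchange_connect x y : connect S x y -> connect S' x y.
Proof.
have cS' := sym_connect_sym exchange_sym.
have Ccd : connect S' c d.
  apply: (connect_trans (connect1 (_ : S' c b))).
    by rewrite /add_edge /uedge !eqxx orbT.
  by rewrite cS'; apply: connect_mono Rdb; apply: add_edge_sub.
apply: connect_sub x y => x y Sxy; have [cdxy | ncdxy] := boolP (uedge c d x y).
  by case/orP: cdxy => /andP[/eqP-> /eqP->]; rewrite // cS'.
by apply: connect1; rewrite /add_edge /rem_edge Sxy ncdxy.
Qed.

Lemma exchange_not_connect : acyclic S -> ~ connect R c b.
Proof.
move=> acS Rcb; apply: (acyclic_bridge sS acS Scd ncd).
by apply: connect_trans Rcb _; rewrite (sym_connect_sym sR).
Qed.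

Lemma exchange_acyclic : acyclic S -> acyclic S'.
Proof.
move=> acS; have nRcb := exchange_not_connect acS.
have cR := sym_connect_sym sR.
(* Without an old edge xy, an x-y path either avoids cb, hence lies in S
   minus xy, or yields a c-b path in R through xy; without cb, c and b would
   be joined in R. *)
apply: bridges_acyclic exchange_sym _ => x y /orP[Rxy | cbxy] nxy cxy.
  have sub : subrel (rem_edge S' x y) (add_edge (rem_edge R x y) c b).
    by move=> p q /andP[/orP[Rpq | cbpq] npq]; apply/orP; [left; apply/andP | right].
  have Rsub : subrel (rem_edge R x y) R := @rem_edge_sub R x y.
  case/connect_add_edge: (connect_mono sub cxy) => [cxy' | [cxc cby] | [cxb ccy]].
  - apply: (acyclic_bridge sS acS (rem_edge_sub Rxy) nxy); apply: connect_mono cxy'.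
    by move=> p q /andP[/andP[Spq _] npq]; rewrite /rem_edge Spq npq.
  - apply: nRcb; rewrite cR.
    apply: connect_trans (connect_mono Rsub cby) _.
    apply: connect_trans _ (connect_mono Rsub cxc).
    by rewrite cR connect1.
  - apply: nRcb.
    apply: connect_trans (connect_mono Rsub ccy) _.
    apply: connect_trans _ (connect_mono Rsub cxb).
    by rewrite cR connect1.
have sub : subrel (rem_edge S' x y) R.
  move=> p q /andP[/orP[// | cbpq]]; case/orP: cbxy => /andP[/eqP-> /eqP->];
    by rewrite ?cbpq // uedgeC cbpq.
have Rxy : connect R x y := connect_mono sub cxy.
by case/orP: cbxy Rxy => /andP[/eqP-> /eqP->]; rewrite ?(cR b c); apply: nRcb.
Qed.

End Exchange.

End EdgeExchange.

Section ContractedGraph.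
Variables (V : finType) (e : rel V) (F : {set V}).

Lemma hadj_sym : symmetric e -> symmetric (hadj e F).
Proof.
move=> se [T|u] [T'|v] //=; rewrite se.
by case: (u \in F); case: (v \in F).
Qed.

Lemma spanning_tree_H_exchange (B : rel (HV V)) c d b : symmetric e ->
  spanning_tree_H e F B -> B c d -> c != d -> connect (rem_edge B c d) d b ->
  hadj e F c b -> spanning_tree_H e F (add_edge (rem_edge B c d) c b).
Proof.
move=> se [sB [subB [connB acB]]] Bcd ncd Rdb Hcb.
split; first exact: exchange_sym.
split; last split; last exact: exchange_acyclic.
  move=> x y /orP[/rem_edge_sub/subB // | /orP[] /andP[/eqP-> /eqP->] //].
  by rewrite hadj_sym.
by move=> x y hx hy; apply: exchange_connect (connB x y hx hy).
Qed.

Lemma n_two_edges_exchange (B : rel (HV V)) u d T :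
  (forall U, ~~ (B (inr u) (inl U) && two_edge e u U)) -> two_edge e u T ->
  n_two_edges e B < n_two_edges e (add_edge (rem_edge B (inr u) d) (inr u) (inl T)).
Proof.
move=> no2 tT; rewrite /n_two_edges; set A := [set p | _]; set A' := [set p | _].
have nA : (u, T) \notin A by rewrite inE no2.
apply: leq_trans (subset_leq_card (_ : (u, T) |: A \subset A')).
  by rewrite cardsU1 nA.
apply/subsetP => -[v U]; rewrite !inE /= => /predU1P[[-> ->] | /andP[BvU tvU]].
  by rewrite tT andbT /add_edge /uedge !eqxx orbT.
have nvu : v != u by apply: contraNneq (no2 U) => vu; rewrite -vu BvU tvU.
have nvu_inr : (inr v == inr u :> HV V) = false by exact: negbTE nvu.
by rewrite tvU andbT /add_edge /rem_edge BvU /uedge nvu_inr andbF.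
Qed.

Lemma induced_setU1 u x y : x != u -> y != u ->
  induced e (u |: F) x y = induced e F x y.
Proof. by move=> xu yu; rewrite /induced !in_setU1 (negbTE xu) (negbTE yu). Qed.

Lemma cycle_induced_setU1 u s : uniq s -> 2 < size s -> u \in s ->
  cycle (induced e (u |: F)) s ->
  exists a b, [/\ a \in F, e u a, e b u, a != b & connect (induced e F) a b].
Proof.
move=> us ss /rot_to[i p hrot] cs.
have: uniq (u :: p) by rewrite -hrot rot_uniq.
have: 2 < size (u :: p) by rewrite -hrot size_rot.
have: cycle (induced e (u |: F)) (u :: p) by rewrite -hrot rot_cycle.
case: p {hrot} => [|a [|c p]] //= /and3P[Rua Rac].
rewrite rcons_path => /andP[pathp Rbu] _.
case/andP=> nu /andP[na _].
have pathF : path (induced e F) a (c :: p).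
  apply: (@sub_in_path _ (predC1 u) (induced e (u |: F))) => [x y /= xu yu||/=].
  - by rewrite induced_setU1.
  - by apply/allP => x xp /=; apply: contraNneq nu => <-.
  - by rewrite Rac.
have /and3P[_ aF eua] := Rua; have /and3P[_ _ ebu] := Rbu.
exists a, (last c p); split=> //.
- by move: aF; rewrite in_setU1; case: eqP nu => // ->; rewrite mem_head.
- by apply: contraNneq na => ->; apply: mem_last.
- by apply/connectP; exists (c :: p).
Qed.

Lemma induced_forest_setU1 u : symmetric e -> induced_forest e F ->
  (forall a b, a \in F -> e u a -> e u b -> connect (induced e F) a b -> a = b) ->
  induced_forest e (u |: F).
Proof.
move=> se forestF tree1 s us ss; apply/negP => cs.
have [u_in_s | u_notin_s] := boolP (u \in s).
  have [a [b [aF eua ebu nab cab]]] := cycle_induced_setU1 us ss u_in_s cs.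
  by move/eqP: nab; apply; apply: tree1 => //; rewrite se.
have /negP[] := forestF s us ss.
apply: (@sub_in_cycle _ (predC1 u) _ _ _ s _ cs) => [x y /= xu yu|].
  by rewrite induced_setU1.
by apply/allP => x xs /=; apply: contraNneq u_notin_s => <-.
Qed.

Lemma exists_two_edge u : simple_graph e -> max_induced_forest e F -> u \notin F ->
  exists T, hadj e F (inr u) (inl T) && two_edge e u T.
Proof.
move=> [se _] [forestF maxF] uF.
case: (pickP (fun T => hadj e F (inr u) (inl T) && two_edge e u T)) => [T ? | no2].
  by exists T.
suff: #|u |: F| <= #|F| by rewrite cardsU1 uF add1n ltnn.
apply: maxF; apply: induced_forest_setU1 => // a b aF eua eub cab.
have aT : a \in compF e F a by rewrite inE connect0.
have bT : b \in compF e F a by rewrite inE.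
have treeT : is_tree e F (compF e F a) by apply/existsP; exists a; rewrite aF eqxx.
have hT : hadj e F (inr u) (inl (compF e F a)).
  by rewrite /= uF treeT; apply/existsP; exists a; rewrite aT eua.
have uaT : a \in [set w in compF e F a | e u w] by rewrite inE aT eua.
have ubT : b \in [set w in compF e F a | e u w] by rewrite inE bT eub.
move: (no2 (compF e F a)); rewrite hT /two_edge /= ltnNge => /negbFE /card_le1_eqP.
by move/(_ a b uaT ubT).
Qed.

End ContractedGraph.

Theorem lemma4 (V : finType) (e : rel V) (F : {set V})
    (B : rel (HV V)) (r : HV V) :
  simple_graph e ->
  connected_graph e ->
  max_induced_forest e F ->
  skeleton e F B r ->
  (forall (B' : rel (HV V)) (r' : HV V),
      skeleton e F B' r' -> n_two_edges e B' <= n_two_edges e B) ->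
  forall u : V, u \notin F ->
    exists T : {set V}, B (inr u) (inl T) && two_edge e u T.
Proof.
move=> sg _ maxF [stB [hr rT]] maxB u uF.
case: (pickP (fun T => B (inr u) (inl T) && two_edge e u T)) => [T uT | no2].
  by exists T.
have [T /andP[huT tT]] := exists_two_edge sg maxF uF.
have [_ [_ [connB _]]] := stB.
have hT : hvert e F (inl T) by case/and3P: huT.
have [d [Bud nud Rdb]] := connect_first_edge (connB (inr u) _ uF hT) isT.
have stB' := spanning_tree_H_exchange sg.1 stB Bud nud Rdb huT.
have := maxB _ r (conj stB' (conj hr rT)).
by rewrite leqNgt n_two_edges_exchange // => U; rewrite no2.
Qed.
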